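(* Let $K$ be a positive integer, let $J$ be a positive integer or $\infty$, write $[J]=\{1,\dots,J\}$ (with $[J]=\mathbb{Z}_+$ if $J=\infty$), and let $Q=[Q_1,\dots,Q_K]$ with $Q_l:[J]\to\{0,1\}$. Let $k\in\{1,\dots,K\}$ and suppose $k$ does not mask any $k'\neq k$. Then $$\{k\}=\bigcap_{\substack{S\subset\{1,\dots,K\}\\ k\in S,\ \mathcal{R}(S)\neq\emptyset}} S.$$
   Context: $\operatorname{supp}(Q_l)=\{j: Q_l(j)=1\}$. For $S\subset\{1,\dots,K\}$, $\mathcal{R}(S)\subset[J]$ is the set of indices $j$ such that $Q_l(j)=1$ for all $l\in S$ and $Q_l(j)=0$ for all $l\notin S$. We say $k$ masks $k'$ if $\operatorname{supp}(Q_{k})\subset\operatorname{supp}(Q_{k'})$. *)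

From mathcomp Require Import all_boot.
Set Implicit Arguments. Unset Strict Implicit. Unset Printing Implicit Defensive.

(* J : option nat, with [None] standing for J = infinity.
   [J] = {1,...,J} (or all positive integers when J = infinity). *)
Definition inJ (J : option nat) (j : nat) : Prop :=
  (1 <= j)%N /\ match J with Some n => (j <= n)%N | None => True end.

(* Q l j = true  means  Q_l(j) = 1  (values of Q outside [J] are irrelevant). *)
Definition supp (J : option nat) (K : nat) (Q : 'I_K -> nat -> bool)
  (l : 'I_K) (j : nat) : Prop := inJ J j /\ Q l j = true.

Definition inR (J : option nat) (K : nat) (Q : 'I_K -> nat -> bool)
  (S : {set 'I_K}) (j : nat) : Prop :=
  inJ J j /\ (forall l : 'I_K, Q l j = true <-> l \in S).

Definition masks (J : option nat) (K : nat) (Q : 'I_K -> nat -> bool)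
  (k k' : 'I_K) : Prop := forall j, supp J Q k j -> supp J Q k' j.

(* l belongs to the intersection of all S with k \in S and R(S) nonempty
   (the empty intersection being all of {1..K}). *)
Definition in_bigcapR (J : option nat) (K : nat) (Q : 'I_K -> nat -> bool)
  (k l : 'I_K) : Prop :=
  forall S : {set 'I_K}, k \in S -> (exists j, inR J Q S j) -> l \in S.

From mathcomp Require Import all_boot.

Set Implicit Arguments.
Unset Strict Implicit.
Unset Printing Implicit Defensive.

(* Every item j of [J] lies in R(S) for S the set of attributes l with
   Q_l(j) = 1.  If j is in supp(Q_k) this S contains k, so every l in the
   intersection has Q_l(j) = 1: k masks every such l, and the non-masking
   hypothesis leaves only l = k. *)

Section ItemPattern.

Variables (J : option nat) (K : nat) (Q : 'I_K -> nat -> bool).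

Definition item_pattern (j : nat) : {set 'I_K} := [set l | Q l j].

Lemma inR_item_pattern j : inJ J j -> inR J Q (item_pattern j) j.
Proof. by move=> Jj; split=> // l; rewrite inE. Qed.

Lemma in_bigcapR_masks k l : in_bigcapR J Q k l -> masks J Q k l.
Proof.
move=> capl j [Jj Qkj]; split=> //.
have := capl (item_pattern j); rewrite !inE; apply=> //.
by exists j; apply: inR_item_pattern.
Qed.

End ItemPattern.

Theorem lemma3 (K : nat) (hK : (0 < K)%N) (J : option nat)
  (hJ : forall n, J = Some n -> (0 < n)%N)
  (Q : 'I_K -> nat -> bool) (k : 'I_K)
  (hmask : forall k' : 'I_K, k' <> k -> ~ masks J Q k k') :
  forall l : 'I_K, l = k <-> in_bigcapR J Q k l.
Proof.
move=> l; split=> [-> S kS _ // | capl].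
have [// | /eqP lk] := eqVneq l k.
by case: (hmask l lk (in_bigcapR_masks capl)).
Qed.
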